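(* Let $Y=\{(x,y)\in\mathbb{R}^2:(x/a)^2+y^2=1\}$ with $1<a\le\sqrt2$, let $X\subseteq Y$ and $0<r<2$. Identify $Y$ with the circle $S^1$ via an orientation-preserving homeomorphism. Orient the edges of the 1-skeleton $\mathrm{VR}_<(X;r)$ by declaring $p\to p'$ iff $p'\in(p,g_r(p))_Y$, and those of $\mathrm{VR}_\le(X;r)$ by declaring $p\to p'$ iff $p'\in(p,g_r(p)]_Y$. Then both resulting directed graphs are cyclic graphs.
   Context: $d$ is the Euclidean metric. $Y$ is oriented clockwise; $(p,q)_Y$, $(p,q]_Y$, $[p,q]_Y$ denote clockwise arcs from $p$ to $q$, and $\prec$ the clockwise cyclic order (points distinct). $h^{-1}(p)$ denotes the point of $Y$ farthest from $p$; for $0<r<2$, $g_r(p)$ is the unique point $q\in[p,h^{-1}(p)]_Y$ with $d(p,q)=r$. $\mathrm{VR}_<(X;r)$ (resp. $\mathrm{VR}_\le(X;r)$) here denotes the graph on $X$ with an edge between points at distance $<r$ (resp. $\le r$). A directed graph with vertex set $V\subseteq S^1$ is cyclic if it has no loops and no opposite edge pairs, and whenever $v\to u$ is an edge, $v\to w$ and $w\to u$ are edges for all $w\in V$ with $v\prec w\prec u\prec v$. *)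

From Stdlib Require Import Reals Lra ClassicalEpsilon.
Open Scope R_scope.

Definition pt := (R * R)%type.

Definition onY (a : R) (p : pt) : Prop := (fst p / a) ^ 2 + (snd p) ^ 2 = 1.

Definition dist (p q : pt) : R :=
  sqrt ((fst p - fst q) ^ 2 + (snd p - snd q) ^ 2).

(* Clockwise parametrization of Y: increasing t moves clockwise. *)
Definition gam (a t : R) : pt := (a * cos t, - sin t).

(* Clockwise arcs from p to q; x is the tested point.
   (p,q)_Y, (p,q]_Y, [p,q]_Y. *)
Definition arc_oo (a : R) (p q x : pt) : Prop :=
  exists t s u, p = gam a t /\ x = gam a (t + s) /\ q = gam a (t + u) /\
    0 < s /\ s < u /\ u < 2 * PI.
Definition arc_oc (a : R) (p q x : pt) : Prop :=
  exists t s u, p = gam a t /\ x = gam a (t + s) /\ q = gam a (t + u) /\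
    0 < s /\ s <= u /\ u < 2 * PI.
Definition arc_cc (a : R) (p q x : pt) : Prop :=
  exists t s u, p = gam a t /\ x = gam a (t + s) /\ q = gam a (t + u) /\
    0 <= s /\ s <= u /\ u < 2 * PI.

(* Clockwise cyclic order v ≺ w ≺ u ≺ v (points distinct). *)
Definition cyc (a : R) (v w u : pt) : Prop := arc_oo a v u w.

Definition pt_inh : inhabited pt := inhabits (0, 0).

Definition hinv (a : R) (p : pt) : pt :=
  epsilon pt_inh (fun q => onY a q /\ forall q', onY a q' -> dist p q' <= dist p q).

Definition g (a r : R) (p : pt) : pt :=
  epsilon pt_inh (fun q => onY a q /\ arc_cc a p (hinv a p) q /\ dist p q = r).

Definition VR_lt_dir (a : R) (X : pt -> Prop) (r : R) (p p' : pt) : Prop :=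
  X p /\ X p' /\ p <> p' /\ dist p p' < r /\ arc_oo a p (g a r p) p'.
Definition VR_le_dir (a : R) (X : pt -> Prop) (r : R) (p p' : pt) : Prop :=
  X p /\ X p' /\ p <> p' /\ dist p p' <= r /\ arc_oc a p (g a r p) p'.

Definition cyclic_graph (a : R) (V : pt -> Prop) (E : pt -> pt -> Prop) : Prop :=
  (forall v, V v -> ~ E v v) /\
  (forall u v, V u -> V v -> E v u -> ~ E u v) /\
  (forall v u w, V v -> V u -> V w -> E v u -> cyc a v w u -> E v w /\ E w u).

(* The chord from gam a t to
   gam a (t + s) has squared length 4 sin^2 (s/2) (1 + (a^2 - 1) sin^2 (t + s/2)), whose
   s-derivative is positive as long as s < PI and the chord is shorter than 2, provided
   a^2 <= 2.  So along every half-turn arc the chord length increases strictly while it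
   stays below 2.  Consequently g_r (gam a t) = gam a (t + sg) with 0 < sg < PI, the
   out-neighbours of gam a t are the points gam a (t + b) with 0 < b < sg (resp. b <= sg),
   and a point strictly inside such an arc is joined to both of its ends by chords shorter
   than the whole one; this gives the cyclic-graph axioms. *)

From Stdlib Require Import Reals Lra ClassicalEpsilon.
From Coquelicot Require Import Coquelicot.
From Pilot Require Import Defs.
Open Scope R_scope.

Section Parametrization.

Variable a : R.
Hypothesis a_neq0 : a <> 0.

Lemma gam_add_2PI x : gam a (x + 2 * PI) = gam a x.
Proof. unfold gam. rewrite cos_plus, sin_plus, cos_2PI, sin_2PI. f_equal; ring. Qed.

Lemma gam_eq_cos_sin t t' : gam a t = gam a t' -> cos t = cos t' /\ sin t = sin t'.
Proof.
  unfold gam. intros [= Ec Es]. split; [apply (Rmult_eq_reg_l a) | lra]; auto.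
Qed.

Lemma gam_eq_add t t' x : gam a t = gam a t' -> gam a (t + x) = gam a (t' + x).
Proof.
  intros [Ec Es]%gam_eq_cos_sin. unfold gam. now rewrite !cos_plus, !sin_plus, Ec, Es.
Qed.

Lemma gam_add_inj t s s' : 0 <= s < 2 * PI -> 0 <= s' < 2 * PI ->
  gam a (t + s) = gam a (t + s') -> s = s'.
Proof.
  intros Hs Hs' [Ec Es]%gam_eq_cos_sin.
  assert (Hcos : cos (s - s') = 1).
  { replace (s - s') with ((t + s) - (t + s')) by ring.
    rewrite cos_minus, Ec, Es. pose proof (sin2_cos2 (t + s')). unfold Rsqr in *. lra. }
  (* cos d = 1 - 2 sin^2 (d/2), and sin (d/2) <> 0 for 0 < d < 2 PI *)
  assert (Hd : forall d, 0 < d < 2 * PI -> cos d <> 1).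
  { intros d Hd. replace d with (2 * (d / 2)) by field. rewrite cos_2a_sin.
    assert (0 < sin (d / 2)) by (apply sin_gt_0; lra). nra. }
  destruct (Rtotal_order s s') as [Hlt | [Heq | Hgt]]; auto; exfalso.
  - apply (Hd (s' - s)); [lra |]. now rewrite <- cos_neg, Ropp_minus_distr.
  - apply (Hd (s - s')); [lra | exact Hcos].
Qed.

Lemma gam_add_neq t s : 0 < s < 2 * PI -> gam a t <> gam a (t + s).
Proof.
  intros Hs E. rewrite <- (Rplus_0_r t) in E at 1. apply gam_add_inj in E; lra.
Qed.

Lemma onY_gam t : onY a (gam a t).
Proof.
  unfold onY, gam; simpl. field_simplify; auto.
  pose proof (sin2_cos2 t). unfold Rsqr in *. nra.
Qed.

(* The arcs of Defs quantify over a parameter of their initial point; any other parameter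
   of that point serves as well. *)
Lemma arc_rebase t p q x (P : R -> R -> Prop) : p = gam a t ->
  (exists t1 s u, p = gam a t1 /\ x = gam a (t1 + s) /\ q = gam a (t1 + u) /\ P s u) ->
  exists s u, x = gam a (t + s) /\ q = gam a (t + u) /\ P s u.
Proof.
  intros -> (t1 & s & u & E & -> & -> & HP). exists s, u.
  split; [| split]; auto; apply gam_eq_add; auto.
Qed.

End Parametrization.

Lemma onY_gam_add a t q : 0 < a -> onY a q -> exists s, 0 <= s < 2 * PI /\ q = gam a (t + s).
Proof.
  intros Ha Hq. destruct q as [x y]. unfold onY in Hq; simpl in Hq.
  (* (A, B) are the coordinates of (x/a, -y) in the frame rotated by t *)
  set (A := x / a * cos t - y * sin t). set (B := - y * cos t - x / a * sin t).
  pose proof (sin2_cos2 t) as Ht. unfold Rsqr in Ht.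
  assert (HAB : A * A + B * B = 1) by (unfold A, B; nra).
  assert (HA : -1 <= A <= 1) by nra.
  assert (Hgam : forall s, cos s = A -> sin s = B -> (x, y) = gam a (t + s)).
  { intros s Hc Hs. unfold gam. rewrite cos_plus, sin_plus, Hc, Hs. unfold A, B.
    f_equal.
    - transitivity (a * (x / a) * (sin t * sin t + cos t * cos t)); [| ring].
      rewrite Ht. field. lra.
    - transitivity (y * (sin t * sin t + cos t * cos t)); [| ring]. rewrite Ht. ring. }
  pose proof (acos_bound A) as Hb. pose proof (cos_acos A HA) as Hc. pose proof PI_RGT_0.
  assert (Hs : sin (acos A) = Rabs B).
  { rewrite sin_acos, <- sqrt_Rsqr_abs by auto. f_equal. unfold Rsqr. lra. }
  destruct (Rle_or_lt 0 B) as [HB | HB].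
  - exists (acos A). split; [lra |]. apply Hgam; auto. rewrite Hs, Rabs_right; lra.
  - assert (acos A <> 0).
    { intro E. rewrite E, sin_0 in Hs. pose proof (Rabs_pos_lt B). lra. }
    exists (2 * PI - acos A). split; [lra |]. apply Hgam.
    + rewrite cos_minus, cos_2PI, sin_2PI. lra.
    + rewrite sin_minus, cos_2PI, sin_2PI, Hs, Rabs_left; lra.
Qed.

Definition clockwise_edge (a : R) (P : R -> R -> Prop) (v u : pt) : Prop :=
  exists t b, v = gam a t /\ u = gam a (t + b) /\ 0 < b /\ P t b.

Lemma cyclic_graph_clockwise_edge a V E (P : R -> R -> Prop) : a <> 0 ->
  (forall v u, E v u <-> V v /\ V u /\ clockwise_edge a P v u) ->
  (forall t b, P t b -> b < PI) ->
  (forall t b s, P t b -> 0 < s < b -> P t s /\ P (t + s) (b - s)) ->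
  cyclic_graph a V E.
Proof.
  intros Ha HE Hshort Hsub. pose proof PI_RGT_0.
  split; [| split].
  - intros v _ (_ & _ & t & b & Ev & Ev' & Hb & HP)%HE. apply Hshort in HP.
    rewrite Ev in Ev'. revert Ev'. apply gam_add_neq; auto. lra.
  - intros u v _ _ (_ & _ & t & b & -> & -> & Hb & HP)%HE
      (_ & _ & t' & b' & Eu & Ev & Hb' & HP')%HE.
    apply Hshort in HP, HP'. apply (gam_eq_add a Ha _ _ b') in Eu.
    rewrite <- Eu, Rplus_assoc in Ev. revert Ev. apply gam_add_neq; auto. lra.
  - intros v u w Hv Hu Hw (_ & _ & t & b & -> & -> & Hb & HP)%HE Hcyc.
    destruct (arc_rebase a Ha t _ _ _ (fun s u => 0 < s /\ s < u /\ u < 2 * PI) eq_refl Hcyc)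
      as (s & b' & -> & Eu & Hs & Hsb' & Hb').
    pose proof (Hshort _ _ HP). apply gam_add_inj in Eu; try lra. subst b'.
    destruct (Hsub t b s HP) as [HPs HPb]; [lra |].
    split; apply HE; (split; [assumption | split; [assumption |]]).
    + exists t, s. auto.
    + exists (t + s), (b - s). repeat split; auto; [f_equal; ring | lra].
Qed.

Lemma dist_sym p q : dist p q = dist q p.
Proof. unfold dist. f_equal. ring. Qed.

Lemma dist_ge0 p q : 0 <= dist p q.
Proof. apply sqrt_pos. Qed.

Lemma dist_same p : dist p p = 0.
Proof. unfold dist. rewrite !Rminus_diag. replace (0 ^ 2 + 0 ^ 2) with 0 by ring. apply sqrt_0. Qed.

Definition half_chord2 (a t h : R) : R :=
  sin h ^ 2 * (1 + (a ^ 2 - 1) * sin (t + h) ^ 2).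

Lemma dist_gam_add_sqr a t s :
  dist (gam a t) (gam a (t + s)) ^ 2 = 4 * half_chord2 a t (s / 2).
Proof.
  unfold dist, gam, half_chord2; simpl fst; simpl snd.
  rewrite pow2_sqrt by (apply Rplus_le_le_0_compat; apply pow2_ge_0).
  set (h := s / 2). set (m := t + h).
  assert (Ec : cos t - cos (t + s) = 2 * sin h * sin m).
  { rewrite form2. replace ((t - (t + s)) / 2) with (- h) by (unfold h; field).
    replace ((t + (t + s)) / 2) with m by (unfold m, h; field). rewrite sin_neg. ring. }
  assert (Es : sin t - sin (t + s) = -2 * cos m * sin h).
  { rewrite form4. replace ((t - (t + s)) / 2) with (- h) by (unfold h; field).
    replace ((t + (t + s)) / 2) with m by (unfold m, h; field). rewrite sin_neg. ring. }
  replace ((a * cos t - a * cos (t + s)) ^ 2 + (- sin t - - sin (t + s)) ^ 2)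
    with (a ^ 2 * (cos t - cos (t + s)) ^ 2 + (sin t - sin (t + s)) ^ 2) by ring.
  rewrite Ec, Es. pose proof (sin2_cos2 m). unfold Rsqr in *. nra.
Qed.

Lemma half_chord2_PI2 a t : 1 <= a -> 1 <= half_chord2 a t (PI / 2).
Proof.
  intros Ha. unfold half_chord2. rewrite sin_PI2.
  assert (0 <= (a ^ 2 - 1) * sin (t + PI / 2) ^ 2) by (apply Rmult_le_pos; [nra | apply pow2_ge_0]).
  lra.
Qed.

Lemma dist_gam_sub a t s : dist (gam a t) (gam a (t - s)) = dist (gam a (- t)) (gam a (- t + s)).
Proof.
  unfold dist, gam; simpl. replace (- t + s) with (- (t - s)) by ring.
  rewrite !cos_neg, !sin_neg. f_equal. ring.
Qed.

Lemma continuous_dist_gam a t : continuity (fun s => dist (gam a t) (gam a (t + s))).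
Proof.
  intro s. apply continuity_pt_filterlim. unfold dist, gam; cbn [fst snd].
  refine (continuous_sqrt_comp _ _ _).
  apply continuity_pt_filterlim, derivable_continuous_pt, ex_derive_Reals_0. auto_derive. auto.
Qed.

Lemma derivable_pt_lim_pos_lt_left f x l lo : derivable_pt_lim f x l -> 0 < l -> lo < x ->
  exists y, lo < y < x /\ f y < f x.
Proof.
  intros Hd Hl Hlo. destruct (Hd l Hl) as [del Hdel].
  set (k := Rmin (del / 2) ((x - lo) / 2)).
  assert (Hk : 0 < k) by (apply Rmin_pos; pose proof (cond_pos del); lra).
  assert (k <= del / 2) by apply Rmin_l. assert (k <= (x - lo) / 2) by apply Rmin_r.
  assert (Hq : Rabs ((f (x + - k) - f x) / - k - l) < l).
  { apply Hdel; [lra |]. rewrite Rabs_left by lra. pose proof (cond_pos del). lra. }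
  apply Rabs_def2 in Hq. exists (x + - k). split; [lra |].
  assert (0 < (f x - f (x + - k)) / k) by (replace ((f x - f (x + - k)) / k)
    with ((f (x + - k) - f x) / - k) by (field; lra); lra).
  assert (0 < f x - f (x + - k)).
  { replace (f x - f (x + - k)) with ((f x - f (x + - k)) / k * k) by (field; lra).
    now apply Rmult_lt_0_compat. }
  lra.
Qed.

(* A minimum of f on [h1, h2] placed right of h1 lies below c, where f' > 0 forces
   smaller values just to its left. *)
Lemma lt_of_derivable_pos_below f f' c h1 h2 : h1 < h2 ->
  (forall x, h1 <= x <= h2 -> derivable_pt_lim f x (f' x)) ->
  (forall x, h1 < x <= h2 -> f x < c -> 0 < f' x) ->
  f h2 < c -> f h1 < f h2.
Proof.
  intros Hh Hder Hpos Hc. apply Rnot_le_lt. intro Hle.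
  destruct (continuity_ab_min f h1 h2) as [M [HM HMb]]; [lra | |].
  { intros x Hx. apply derivable_continuous_pt. exists (f' x). now apply Hder. }
  assert (Hx : exists x, h1 < x <= h2 /\ forall y, h1 <= y <= h2 -> f x <= f y).
  { destruct (Req_dec M h1) as [-> | E].
    - exists h2. split; [lra |]. intros y Hy. specialize (HM y Hy). lra.
    - exists M. split; [lra | exact HM]. }
  destruct Hx as (x & Hxb & Hxmin).
  assert (Hfx : f x < c) by (specialize (Hxmin h2); lra).
  destruct (derivable_pt_lim_pos_lt_left f x (f' x) h1) as (y & Hy & Hfy).
  - apply Hder; lra.
  - now apply Hpos.
  - lra.
  - specialize (Hxmin y). lra.
Qed.

(* With c = a^2 - 1, sh = sin h, S = sin (t + h): the derivative of half_chord2 is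
   2 sh times this factor.  The bound c <= 1 is where a <= sqrt 2 is used. *)
Lemma half_chord2_factor_pos (c sh ch S C : R) : 0 < c <= 1 ->
  sh ^ 2 + ch ^ 2 = 1 -> S ^ 2 + C ^ 2 = 1 -> 0 < ch ->
  sh ^ 2 * (1 + c * S ^ 2) < 1 -> 0 < ch * (1 + c * S ^ 2) + c * sh * S * C.
Proof.
  intros Hc Hh HS Hch H.
  assert (Hsh : 0 <= sh ^ 2 <= 1) by (split; nra).
  assert (HC : 0 <= C ^ 2 <= 1) by (split; nra).
  assert (HS0 : 0 <= c * S ^ 2) by nra.
  (* compare squares: (c sh S C)^2 <= c S^2 < (ch (1 + c S^2))^2 *)
  set (P := ch * (1 + c * S ^ 2)). set (Q := c * sh * S * C).
  assert (HP : 0 < P) by (unfold P; nra).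
  assert (HQ2 : Q ^ 2 <= c * S ^ 2).
  { unfold Q. replace ((c * sh * S * C) ^ 2) with ((c * S ^ 2) * (c * sh ^ 2 * C ^ 2)) by ring.
    assert (sh ^ 2 * C ^ 2 <= 1) by nra.
    assert (c * sh ^ 2 * C ^ 2 <= 1) by nra. nra. }
  assert (HP2 : c * S ^ 2 < P ^ 2).
  { assert (ch ^ 2 * (1 + c * S ^ 2) = (1 + c * S ^ 2) - sh ^ 2 * (1 + c * S ^ 2)).
    { replace (ch ^ 2) with (1 - sh ^ 2) by lra. ring. }
    unfold P. replace ((ch * (1 + c * S ^ 2)) ^ 2)
      with (ch ^ 2 * (1 + c * S ^ 2) * (1 + c * S ^ 2)) by ring.
    nra. }
  nra.
Qed.

Section Ellipse.

Variable a : R.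
Hypothesis a_gt1 : 1 < a.
Hypothesis a2_le2 : a ^ 2 <= 2.

Let a_neq0 : a <> 0. Proof. lra. Qed.

Lemma half_chord2_lt t h1 h2 : 0 <= h1 < h2 -> h2 <= PI / 2 ->
  half_chord2 a t h2 < 1 -> half_chord2 a t h1 < half_chord2 a t h2.
Proof.
  intros Hh1 Hh2. apply (lt_of_derivable_pos_below _
    (fun h => 2 * sin h * (cos h * (1 + (a ^ 2 - 1) * sin (t + h) ^ 2)
                + (a ^ 2 - 1) * sin h * sin (t + h) * cos (t + h)))); [lra | |].
  - intros x _. apply is_derive_Reals. unfold half_chord2. auto_derive; auto. ring.
  - intros x Hx Hlt1.
    assert (Hx2 : x < PI / 2).
    { destruct (Req_dec x (PI / 2)) as [-> | ]; [| lra].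
      pose proof (half_chord2_PI2 a t). lra. }
    apply Rmult_lt_0_compat; [apply Rmult_lt_0_compat; [lra | apply sin_gt_0; lra] |].
    apply half_chord2_factor_pos; [nra | | | apply cos_gt_0; lra | exact Hlt1];
      [pose proof (sin2_cos2 x) | pose proof (sin2_cos2 (t + x))]; unfold Rsqr in *; lra.
Qed.

Lemma dist_gam_add_lt t s1 s2 : 0 <= s1 < s2 -> s2 <= PI ->
  dist (gam a t) (gam a (t + s2)) < 2 ->
  dist (gam a t) (gam a (t + s1)) < dist (gam a t) (gam a (t + s2)).
Proof.
  intros Hs1 Hs2 Hd2.
  pose proof (dist_gam_add_sqr a t s1). pose proof (dist_gam_add_sqr a t s2).
  pose proof (dist_ge0 (gam a t) (gam a (t + s1))).
  pose proof (dist_ge0 (gam a t) (gam a (t + s2))).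
  assert (half_chord2 a t (s1 / 2) < half_chord2 a t (s2 / 2))
    by (apply half_chord2_lt; auto; nra).
  nra.
Qed.

Lemma dist_gam_sub_lt t s1 s2 : 0 <= s1 < s2 -> s2 <= PI ->
  dist (gam a t) (gam a (t - s2)) < 2 ->
  dist (gam a t) (gam a (t - s1)) < dist (gam a t) (gam a (t - s2)).
Proof. rewrite !dist_gam_sub. apply dist_gam_add_lt. Qed.

Lemma dist_gam_inner_lt t s b : 0 < s < b -> b <= PI ->
  dist (gam a t) (gam a (t + b)) < 2 ->
  dist (gam a t) (gam a (t + s)) < dist (gam a t) (gam a (t + b)) /\
  dist (gam a (t + s)) (gam a (t + b)) < dist (gam a t) (gam a (t + b)).
Proof.
  intros Hs Hb Hd. split; [apply dist_gam_add_lt; auto; lra |].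
  rewrite !(dist_sym _ (gam a (t + b))) in *.
  replace (gam a (t + s)) with (gam a (t + b - (b - s))) by (f_equal; ring).
  replace (gam a t) with (gam a (t + b - b)) in * by (f_equal; ring).
  apply dist_gam_sub_lt; auto; lra.
Qed.

Lemma dist_gam_antipode t : 2 <= dist (gam a t) (gam a (t + PI)).
Proof.
  pose proof (dist_gam_add_sqr a t PI). pose proof (dist_ge0 (gam a t) (gam a (t + PI))).
  pose proof (half_chord2_PI2 a t). nra.
Qed.

Lemma hinv_gam t : onY a (hinv a (gam a t)) /\ 2 <= dist (gam a t) (hinv a (gam a t)).
Proof.
  assert (Hex : exists q, onY a q /\
    forall q', onY a q' -> dist (gam a t) q' <= dist (gam a t) q).
  { pose proof PI_RGT_0.
    destruct (continuity_ab_maj (fun s => dist (gam a t) (gam a (t + s))) 0 (2 * PI))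
      as [M [HM HMb]]; [lra | intros; apply continuous_dist_gam |].
    exists (gam a (t + M)). split; [now apply onY_gam |].
    intros q' Hq'. destruct (onY_gam_add a t q') as (s & Hs & ->); [lra | auto |].
    apply HM. lra. }
  destruct (epsilon_spec pt_inh _ Hex) as [Hon Hfar]. fold (hinv a (gam a t)) in *.
  split; [exact Hon |].
  eapply Rle_trans; [apply dist_gam_antipode | apply Hfar, onY_gam; auto].
Qed.

Section Radius.

Variable r : R.
Hypothesis r_bounds : 0 < r < 2.

Lemma g_gam t : exists sg, 0 < sg < PI /\
  g a r (gam a t) = gam a (t + sg) /\ dist (gam a t) (gam a (t + sg)) = r.
Proof.
  pose proof PI_RGT_0.
  destruct (hinv_gam t) as [Hon Hfar].
  destruct (onY_gam_add a t _ ltac:(lra) Hon) as (ss & Hss & Ess).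
  rewrite Ess in Hfar.
  assert (Hd0 : forall s, s = 0 -> dist (gam a t) (gam a (t + s)) = 0).
  { intros s ->. rewrite Rplus_0_r. apply dist_same. }
  assert (Hss0 : 0 < ss).
  { destruct (Req_dec ss 0) as [E | ]; [rewrite Hd0 in Hfar; auto; lra | lra]. }
  assert (Hex : exists q, onY a q /\ arc_cc a (gam a t) (hinv a (gam a t)) q /\
    dist (gam a t) q = r).
  { destruct (IVT (fun s => dist (gam a t) (gam a (t + s)) - r) 0 ss) as (z & Hz & Hz0).
    - apply continuity_minus; [apply continuous_dist_gam | apply continuity_const; now intros].
    - exact Hss0.
    - rewrite Hd0; auto; lra.
    - lra.
    - exists (gam a (t + z)). split; [now apply onY_gam |]. split; [| lra].
      exists t, z, ss. repeat split; auto; lra. }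
  destruct (epsilon_spec pt_inh _ Hex) as (_ & Harc & Hd). fold (g a r (gam a t)) in *.
  destruct (arc_rebase a a_neq0 t _ _ _ (fun s u => 0 <= s /\ s <= u /\ u < 2 * PI)
    eq_refl Harc) as (s & u & Eg & Eu & Hs0 & Hsu & Hu).
  rewrite Ess in Eu. apply gam_add_inj in Eu; auto; try lra. subst u.
  rewrite Eg in Hd |- *. exists s. repeat split; auto.
  - destruct (Req_dec s 0) as [E | ]; [rewrite Hd0 in Hd; auto; lra | lra].
  - apply Rnot_le_lt. intro Hpi.
    destruct (Req_dec s PI) as [-> | Hne]; [pose proof (dist_gam_antipode t); lra |].
    destruct (Req_dec s ss) as [-> | Hne']; [lra |].
    (* Seen backwards from t + 2 PI, both points lie on an arc shorter than PI. *)
    pose proof (dist_gam_sub_lt (t + 2 * PI) (2 * PI - ss) (2 * PI - s)) as Hlt.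
    replace (t + 2 * PI - (2 * PI - ss)) with (t + ss) in Hlt by ring.
    replace (t + 2 * PI - (2 * PI - s)) with (t + s) in Hlt by ring.
    rewrite gam_add_2PI in Hlt. lra.
Qed.

Lemma dist_gam_lt_iff t sg s : 0 < sg <= PI -> dist (gam a t) (gam a (t + sg)) = r ->
  0 <= s <= PI -> (dist (gam a t) (gam a (t + s)) < r <-> s < sg).
Proof.
  intros Hsg Hd Hs. split.
  - intro Hlt. apply Rnot_le_lt. intros [Hgt | ->]; [| lra].
    pose proof (dist_gam_add_lt t sg s). lra.
  - intro Hlt. pose proof (dist_gam_add_lt t s sg). lra.
Qed.

Lemma dist_gam_le_iff t sg s : 0 < sg <= PI -> dist (gam a t) (gam a (t + sg)) = r ->
  0 <= s <= PI -> (dist (gam a t) (gam a (t + s)) <= r <-> s <= sg).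
Proof.
  intros Hsg Hd Hs. split.
  - intro Hle. apply Rnot_lt_le. intro Hgt.
    pose proof (dist_gam_add_lt t sg s). lra.
  - intros [Hlt | ->]; [| lra]. pose proof (dist_gam_add_lt t s sg). lra.
Qed.

Variable X : pt -> Prop.

Lemma VR_lt_dir_iff v u : VR_lt_dir a X r v u <-> X v /\ X u /\
  clockwise_edge a (fun t b => b < PI /\ dist (gam a t) (gam a (t + b)) < r) v u.
Proof.
  pose proof PI_RGT_0. split.
  - intros (Xv & Xu & _ & Hd & t & b & c & -> & -> & Eg & Hb & Hbc & Hc).
    destruct (g_gam t) as (sg & Hsg & Eg' & _).
    rewrite Eg' in Eg. apply gam_add_inj in Eg; [| lra | lra | lra]. subst c.
    repeat split; auto. exists t, b. repeat split; auto; lra.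
  - intros (Xv & Xu & t & b & -> & -> & Hb & Hpi & Hd).
    destruct (g_gam t) as (sg & Hsg & Eg & Hdsg).
    repeat split; auto; [apply gam_add_neq; lra |].
    exists t, b, sg. rewrite Eg. repeat split; auto; try lra.
    apply (dist_gam_lt_iff t sg b); auto; lra.
Qed.

Lemma VR_le_dir_iff v u : VR_le_dir a X r v u <-> X v /\ X u /\
  clockwise_edge a (fun t b => b < PI /\ dist (gam a t) (gam a (t + b)) <= r) v u.
Proof.
  pose proof PI_RGT_0. split.
  - intros (Xv & Xu & _ & Hd & t & b & c & -> & -> & Eg & Hb & Hbc & Hc).
    destruct (g_gam t) as (sg & Hsg & Eg' & _).
    rewrite Eg' in Eg. apply gam_add_inj in Eg; [| lra | lra | lra]. subst c.
    repeat split; auto. exists t, b. repeat split; auto; lra.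
  - intros (Xv & Xu & t & b & -> & -> & Hb & Hpi & Hd).
    destruct (g_gam t) as (sg & Hsg & Eg & Hdsg).
    repeat split; auto; [apply gam_add_neq; lra |].
    exists t, b, sg. rewrite Eg. repeat split; auto; try lra.
    apply (dist_gam_le_iff t sg b); auto; lra.
Qed.

End Radius.

End Ellipse.

Theorem mainTheorem19 (a r : R) (X : pt -> Prop)
  (ha : 1 < a <= sqrt 2) (hX : forall p, X p -> onY a p) (hr : 0 < r < 2) :
  cyclic_graph a X (VR_lt_dir a X r) /\ cyclic_graph a X (VR_le_dir a X r).
Proof.
  destruct ha as [Ha Ha_sqrt2].
  assert (Ha2 : a ^ 2 <= 2).
  { pose proof (sqrt_sqrt 2 ltac:(lra)). pose proof (sqrt_pos 2). nra. }
  split.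
  - apply (cyclic_graph_clockwise_edge a X _
      (fun t b => b < PI /\ dist (gam a t) (gam a (t + b)) < r)); [lra | | now intros t b [] |].
    + intros v u. now apply VR_lt_dir_iff.
    + intros t b s [Hb Hd] Hs. replace (t + s + (b - s)) with (t + b) by ring.
      destruct (dist_gam_inner_lt a Ha Ha2 t s b) as [Hin1 Hin2]; lra.
  - apply (cyclic_graph_clockwise_edge a X _
      (fun t b => b < PI /\ dist (gam a t) (gam a (t + b)) <= r)); [lra | | now intros t b [] |].
    + intros v u. now apply VR_le_dir_iff.
    + intros t b s [Hb Hd] Hs. replace (t + s + (b - s)) with (t + b) by ring.
      destruct (dist_gam_inner_lt a Ha Ha2 t s b) as [Hin1 Hin2]; lra.
Qed.
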